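(* Let $s\in\Sigma^*$ be non-empty with run-length encoding $s=a_1^{m_1}\cdots a_r^{m_r}$, let $h=\lceil r/2\rceil$, and let $\mathcal{K}(s)$ be the symbol string of the last token of $\mathcal{F}(s)$. Then $\mathcal{K}(s)=a_h^{m_h}$ if $r$ is odd and $\mathcal{K}(s)=a_h^{m_h}a_{h+1}^{m_{h+1}}$ if $r$ is even. In either case $\mathcal{K}(s)$ contains at most two distinct symbols.
   Context: Let $\Sigma$ be an alphabet and $\texttt{@},\texttt{\$}$ two distinct symbols not in $\Sigma$. The run-length encoding of a non-empty string $s$ is the unique decomposition $s=a_1^{m_1}\cdots a_r^{m_r}$ with $a_i\in\Sigma$, $m_i\ge1$, $a_i\ne a_{i+1}$ ($a^m$ is $a$ repeated $m$ times). For $s$ with $|s|=n$ let $\hat s=\texttt{@}\,s\,\texttt{\$}$ (positions $1,\dots,n+2$); $\hat s[i..j)$ is the substring at positions $i,\dots,j-1$. The leading (trailing) run of a non-empty string is its longest prefix (suffix) consisting of one repeated symbol. The Flashback decomposition $\mathcal{F}(s)$ is the sequence of tokens $(\sigma,p)$ (symbol string $\sigma$, split position $p$) produced as follows, starting from active span $[lo,hi)=[1,n+3)$: if $lo\ge hi$, stop. Let $\ell$ be the leading-run length of $\hat s[lo..hi)$. If $\ell=hi-lo$, append $(\hat s[lo..hi),0)$ and stop. Otherwise let $\hat s[r'..hi)$ be the trailing run of $\hat s[lo..hi)$ and $\sigma=\hat s[lo..lo+\ell)\cdot\hat s[r'..hi)$; if $lo+\ell\ge r'$, append $(\sigma,0)$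 and stop; otherwise append $(\sigma,\ell)$ and repeat with $[lo+\ell,r')$. The symbol string of the last token is called the peeling kernel $\mathcal{K}(s)$. *)

From mathcomp Require Import all_boot.
Set Implicit Arguments. Unset Strict Implicit. Unset Printing Implicit Defensive.

(* Extended alphabet: inl a for a in Sigma, inr false = '@', inr true = '$'. *)
Definition esym (T : eqType) := (T + bool)%type.
Definition At {T : eqType} : esym T := inr false.
Definition Dol {T : eqType} : esym T := inr true.

(* hat s = @ s $ , positions 1..n+2 *)
Definition hat (T : eqType) (s : seq T) : seq (esym T) :=
  At :: rcons (map inl s) Dol.

(* w[i..j) with 1-based positions i,...,j-1 *)
Definition sub (S : eqType) (w : seq S) (i j : nat) : seq S :=
  take (j - i) (drop i.-1 w).

Definition lead_len (S : eqType) (w : seq S) : nat :=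
  match w with
  | [::] => 0
  | x :: t => (find (fun y => y != x) t).+1
  end.

Definition trail_len (S : eqType) (w : seq S) : nat := lead_len (rev w).

Fixpoint flash_aux (S : eqType) (fuel : nat) (w : seq S) (lo hi : nat)
  : seq (seq S * nat) :=
  match fuel with
  | 0 => [::]
  | fuel'.+1 =>
    if hi <= lo then [::] else
    let u := sub w lo hi in
    let l := lead_len u in
    if l == hi - lo then [:: (u, 0)] else
    let r' := hi - trail_len u in
    let sigma := sub w lo (lo + l) ++ sub w r' hi in
    if r' <= lo + l then [:: (sigma, 0)]
    else (sigma, l) :: flash_aux fuel' w (lo + l) r'
  end.

(* Flashback decomposition F(s); start span [1, n+3).  The fuel n+3 exceeds the
   number of iterations, since each non-final step shrinks the span by >= 2. *)
Definition flashback (T : eqType) (s : seq T) : seq (seq (esym T) * nat) :=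
  flash_aux (size s + 3) (hat s) 1 (size s + 3).

Definition kernel (T : eqType) (s : seq T) : seq (esym T) :=
  (last ([::], 0) (flashback s)).1.

(* The span [lo, hi) of the peeling always covers a whole number of runs of
   hat s = @ s $, whose runs are @, a_1^{m_1}, ..., a_r^{m_r}, $.  When it
   covers at least three runs, one step strips exactly the first and the last
   of them; so after about r/2 steps one or two runs remain, and these are the
   central runs of s. *)
From Pilot Require Import Defs.
From mathcomp Require Import all_boot zify.

Section Peeling.
Variable S : eqType.
Implicit Types (x y : S) (u v P Q : seq S).

Lemma sub_cat_mid {P u Q lo hi} :
  lo = (size P).+1 -> hi = lo + size u -> sub (P ++ u ++ Q) lo hi = u.
Proof. by move=> -> ->; rewrite /sub addKn /= drop_size_cat // take_size_cat. Qed.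

Lemma lead_len_nseq M x : 0 < M -> lead_len (nseq M x) = M.
Proof.
case: M => // M _ /=.
by rewrite -[nseq M x]cats0 find_cat has_nseq eqxx andbF size_nseq addn0.
Qed.

Lemma lead_len_nseq_cat M x v :
  0 < M -> head x v != x -> lead_len (nseq M x ++ v) = M.
Proof.
case: M => // M _; case: v => [|c t] /=; first by rewrite eqxx.
by move=> cx; rewrite find_cat has_nseq eqxx andbF size_nseq /= cx addn0.
Qed.

Lemma trail_len_cat_nseq N y v :
  0 < N -> last y v != y -> trail_len (v ++ nseq N y) = N.
Proof.
move=> N0; case/lastP: v => [|t c]; first by rewrite /= eqxx.
rewrite last_rcons => cy.
by rewrite /trail_len rev_cat rev_nseq rev_rcons lead_len_nseq_cat.
Qed.

Lemma flash_aux_run fuel P x M Q lo :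
  0 < M -> lo = (size P).+1 ->
  flash_aux fuel.+1 (P ++ nseq M x ++ Q) lo (lo + size (nseq M x))
  = [:: (nseq M x, 0)].
Proof.
move=> M0 Hlo /=; rewrite (sub_cat_mid Hlo) // size_nseq lead_len_nseq // addKn eqxx.
by rewrite ifF //; lia.
Qed.

Lemma flash_aux_two_runs fuel P x M y N Q lo :
  0 < M -> 0 < N -> x != y -> lo = (size P).+1 ->
  flash_aux fuel.+1 (P ++ (nseq M x ++ nseq N y) ++ Q) lo
    (lo + size (nseq M x ++ nseq N y)) = [:: (nseq M x ++ nseq N y, 0)].
Proof.
move=> M0 N0 xy Hlo.
have headN : head x (nseq N y) != x by case: N N0; rewrite //= eq_sym.
have lastM : last y (nseq M x) != y by case: M M0 => //= M _; elim: M.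
set u := nseq M x ++ nseq N y; rewrite /= (sub_cat_mid Hlo) //.
rewrite lead_len_nseq_cat // trail_len_cat_nseq // size_cat !size_nseq.
rewrite ifF; last lia.
rewrite ifF; last lia.
rewrite ifT; last lia.
have subL : sub (P ++ u ++ Q) lo (lo + M) = nseq M x.
  have -> : P ++ u ++ Q = P ++ nseq M x ++ (nseq N y ++ Q) by rewrite /u !catA.
  by rewrite (sub_cat_mid Hlo) // size_nseq.
have subR : sub (P ++ u ++ Q) (lo + (M + N) - N) (lo + (M + N)) = nseq N y.
  have -> : P ++ u ++ Q = (P ++ nseq M x) ++ nseq N y ++ Q by rewrite /u !catA.
  by rewrite (sub_cat_mid (P := P ++ _)) // ?size_cat ?size_nseq; lia.
by rewrite subL subR.
Qed.

Lemma flash_aux_peel fuel P x M v y N Q lo :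
  0 < M -> 0 < N -> head x v != x -> last y v != y -> lo = (size P).+1 ->
  let u := nseq M x ++ v ++ nseq N y in
  flash_aux fuel.+1 (P ++ u ++ Q) lo (lo + size u)
  = (nseq M x ++ nseq N y, M)
    :: flash_aux fuel (P ++ u ++ Q) (lo + M) (lo + M + size v).
Proof.
case: v => [|c t]; first by rewrite /= eqxx.
move=> M0 N0 cx ly Hlo u; rewrite /= in cx ly.
have lu : lead_len u = M by rewrite lead_len_nseq_cat.
have tu : trail_len u = N by rewrite /u catA trail_len_cat_nseq // last_cat.
have su : size u = M + (size t).+1 + N by rewrite /u !size_cat !size_nseq /= addnA.
rewrite /= (sub_cat_mid Hlo) // lu tu su.
rewrite ifF; last lia.
rewrite ifF; last lia.
have -> : lo + (M + (size t).+1 + N) - N = lo + M + (size t).+1 by lia.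
have subL : sub (P ++ u ++ Q) lo (lo + M) = nseq M x.
  have -> : P ++ u ++ Q = P ++ nseq M x ++ (c :: t ++ nseq N y ++ Q).
    by rewrite /u -!catA.
  by rewrite (sub_cat_mid Hlo) // size_nseq.
have subR :
    sub (P ++ u ++ Q) (lo + M + (size t).+1) (lo + (M + (size t).+1 + N)) = nseq N y.
  have -> : P ++ u ++ Q = (P ++ nseq M x ++ c :: t) ++ nseq N y ++ Q.
    by rewrite /u -!catA /= -?catA.
  by rewrite (sub_cat_mid (P := P ++ _)) // ?size_cat ?size_nseq /=; lia.
by rewrite subL subR ifF //; lia.
Qed.

End Peeling.

Section Runs.
Context {S : eqType} (a : nat -> S) (m : nat -> nat).

Definition run i := nseq (m i) (a i).

Definition runs k n := flatten [seq run i | i <- iota k n].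

Definition is_rle k n :=
  (forall i, k <= i < k + n -> 0 < m i) /\
  (forall i, k <= i -> i.+1 < k + n -> a i != a i.+1).

(* c is the central run among runs k, ..., k+n-1 when n is odd, and the left
   of the two central ones when n is even. *)
Definition mid_runs k n :=
  let c := k + n.-1./2 in if odd n then run c else run c ++ run c.+1.

Lemma runs1 k : runs k 1 = run k.
Proof. by rewrite /runs /= cats0. Qed.

Lemma runs2 k : runs k 2 = run k ++ run k.+1.
Proof. by rewrite /runs /= cats0. Qed.

Lemma runs_rcons k n : runs k n.+1 = runs k n ++ run (k + n).
Proof. by rewrite /runs -addn1 iotaD map_cat flatten_cat /= cats0. Qed.

Lemma runs_peel k n : runs k n.+2 = run k ++ runs k.+1 n ++ run (k + n.+1).
Proof. by rewrite runs_rcons -catA. Qed.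

Lemma size_runs k n :
  (forall i, k <= i < k + n -> 0 < m i) -> n <= size (runs k n).
Proof.
elim: n k => [//|n IH] k Hm; rewrite /runs /= size_cat size_nseq.
have := IH k.+1 (fun i Hi => Hm i ltac:(lia)); have := Hm k ltac:(lia).
by rewrite /runs; lia.
Qed.

Lemma head_runs x0 k n : 0 < m k -> head x0 (runs k n.+1) = a k.
Proof. by rewrite /runs /= /run; case: (m k). Qed.

Lemma last_runs x0 k n : 0 < m (k + n) -> last x0 (runs k n.+1) = a (k + n).
Proof.
by rewrite runs_rcons last_cat /run; case: (m (k + n)) => //= M _; elim: M.
Qed.

Lemma mid_runs_peel k n : mid_runs k n.+3 = mid_runs k.+1 n.+1.
Proof. by rewrite /mid_runs /= negbK addSnnS. Qed.

Lemma is_rle_peel k n : is_rle k n.+2 -> is_rle k.+1 n.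
Proof. by case=> Hm Ha; split=> [i Hi | i Hi Hi']; [apply: Hm | apply: Ha]; lia. Qed.

Lemma last_flash_aux_runs fuel n k P Q lo x0 :
  0 < n <= fuel -> is_rle k n -> lo = (size P).+1 ->
  last x0 (flash_aux fuel (P ++ runs k n ++ Q) lo (lo + size (runs k n)))
  = (mid_runs k n, 0).
Proof.
elim: fuel n k P Q lo x0 => [|fuel IH] [|[|[|n]]] k P Q lo x0 // Hn [Hm Ha] Hlo.
- have mk : 0 < m k by apply: Hm; lia.
  by rewrite runs1 flash_aux_run // /mid_runs /= addn0.
- have [mk mk1 ak] : [/\ 0 < m k, 0 < m k.+1 & a k != a k.+1].
    by split; [apply: Hm | apply: Hm | apply: Ha]; lia.
  by rewrite runs2 flash_aux_two_runs // /mid_runs /= addn0.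
have mk : 0 < m k by apply: Hm; lia.
have mL : 0 < m (k + n.+2) by apply: Hm; lia.
have headM : head (a k) (runs k.+1 n.+1) != a k.
  by rewrite head_runs; [rewrite eq_sym; apply: Ha | apply: Hm]; lia.
have lastM : last (a (k + n.+2)) (runs k.+1 n.+1) != a (k + n.+2).
  rewrite last_runs addSnnS; last by apply: Hm; lia.
  by rewrite [k + n.+2]addnS; apply: Ha; lia.
rewrite runs_peel flash_aux_peel //= mid_runs_peel.
have -> : P ++ (run k ++ runs k.+1 n.+1 ++ run (k + n.+2)) ++ Q
        = (P ++ run k) ++ runs k.+1 n.+1 ++ (run (k + n.+2) ++ Q) by rewrite !catA.
apply: IH; [lia | exact: is_rle_peel | by rewrite size_cat size_nseq Hlo].
Qed.

End Runs.

Lemma runs_map {S S' : eqType} (f : S -> S') a a' m m' k n :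
  (forall i, k <= i < k + n -> run a' m' i = map f (run a m i)) ->
  runs a' m' k n = map f (runs a m k n).
Proof.
move=> Hrun; rewrite /runs map_flatten -map_comp; congr flatten.
by apply/eq_in_map => i; rewrite mem_iota => /Hrun.
Qed.

Lemma mid_runs_map {S S' : eqType} (f : S -> S') a a' m m' k n :
  (forall i, k <= i < k + n -> run a' m' i = map f (run a m i)) -> 0 < n ->
  mid_runs a' m' k n = map f (mid_runs a m k n).
Proof.
by move=> Hrun n0; rewrite /mid_runs; case: ifP => odd_n; rewrite ?map_cat !Hrun //; lia.
Qed.

Lemma size_undup_mid_runs {S : eqType} (a : nat -> S) m k n :
  size (undup (mid_runs a m k n)) <= 2.
Proof.
rewrite /mid_runs; set c := k + _.
apply: (uniq_leq_size (s2 := [:: a c; a c.+1])); first exact: undup_uniq.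
move=> z; rewrite mem_undup !inE; case: ifP => _; rewrite ?mem_cat !mem_nseq.
  by case/andP=> _ ->.
by case/orP=> /andP[_ ->]; rewrite ?orbT.
Qed.

Section Hat.
Variables (T : eqType) (r : nat) (a : nat -> T) (m : nat -> nat).

(* hat s read as runs 0, ..., r+1 of a run-length encoding: @ and $ are the
   runs 0 and r+1, of length 1. *)
Definition hat_sym i : Defs.esym T :=
  if i == 0 then At else if i <= r then inl (a i) else Dol.

Definition hat_mult i := if 0 < i <= r then m i else 1.

Lemma run_hat i : 0 < i <= r -> run hat_sym hat_mult i = map inl (run a m i).
Proof.
move=> Hi; rewrite /run /hat_sym /hat_mult map_nseq Hi.
by have [-> ->] : (i == 0) = false /\ (i <= r) by split; lia.
Qed.

Lemma runs_hat : runs hat_sym hat_mult 0 r.+2 = hat (runs a m 1 r).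
Proof.
rewrite runs_peel (runs_map inl a _ m); last by move=> i Hi; apply: run_hat; lia.
by rewrite /run /hat_sym /hat_mult /hat /= ltnn cats1.
Qed.

Lemma is_rle_hat : is_rle a m 1 r -> is_rle hat_sym hat_mult 0 r.+2.
Proof.
case=> Hm Ha; split=> [i Hi | i _ Hi].
  by rewrite /hat_mult; case: ifP => // Hi'; apply: Hm; lia.
rewrite /hat_sym; case: (i =P 0) => [-> | /eqP i0] /=; first by case: ifP.
rewrite ifT; last lia.
by case: ifP => // Hi'; rewrite inj_eq; [apply: Ha; lia | move=> x y []].
Qed.

Lemma kernel_runs :
  0 < r -> is_rle a m 1 r -> kernel (runs a m 1 r) = map inl (mid_runs a m 1 r).
Proof.
move=> r0 rle; have rle_hat := is_rle_hat rle.
have size_hat : size (runs hat_sym hat_mult 0 r.+2) = size (runs a m 1 r) + 2.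
  by rewrite runs_hat /hat /= size_rcons size_map addn2.
have := size_runs hat_sym _ _ _ rle_hat.1; rewrite size_hat => fuel_ok.
have hiE : 1 + (size (runs a m 1 r) + 2) = size (runs a m 1 r) + 3 by lia.
have := last_flash_aux_runs hat_sym hat_mult (size (runs a m 1 r) + 3) r.+2 0
          [::] [::] 1 ([::], 0) _ rle_hat erefl.
rewrite /kernel /flashback cat0s cats0 size_hat runs_hat hiE => -> /=; last first.
  by apply: (leq_trans fuel_ok); rewrite leq_add2l.
rewrite -(prednK r0) mid_runs_peel prednK // (mid_runs_map inl a _ m) // => i Hi.
by apply: run_hat; lia.
Qed.

End Hat.

Theorem corollary6p7 (T : eqType) (s : seq T) (r : nat)
    (a : nat -> T) (m : nat -> nat) :
  s != [::] ->
  (forall i, 1 <= i <= r -> 1 <= m i) ->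
  (forall i, 1 <= i < r -> a i != a i.+1) ->
  s = flatten [seq nseq (m i) (a i) | i <- iota 1 r] ->
  let h := (r + 1) %/ 2 in
  kernel s =
    map inl (if odd r then nseq (m h) (a h)
             else nseq (m h) (a h) ++ nseq (m h.+1) (a h.+1))
  /\ size (undup (kernel s)) <= 2.
Proof.
move=> s0 Hm Ha Hs h.
have r0 : 0 < r by move: s0; rewrite Hs; case: r {Hs Hm Ha h}.
have rle : is_rle a m 1 r by split=> [i Hi | i Hi Hi']; [apply: Hm | apply: Ha]; lia.
have kE : kernel s = map inl (mid_runs a m 1 r) by rewrite Hs kernel_runs.
have hE : 1 + r.-1./2 = h by rewrite /h; lia.
rewrite kE undup_map_inj; last by move=> x y [].
split; last by rewrite size_map size_undup_mid_runs.
by rewrite /mid_runs hE; case: (odd r); rewrite ?map_cat.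
Qed.
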